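(* Let $n\ge 1$ and for $R>0$ let $P_n(R)$ be the set of monic degree-$n$ polynomials with integer coefficients having a real root $\lambda>1$ with all other roots strictly smaller than $\lambda$ in absolute value, and all of whose roots have absolute value at most $R$. Then $$\lim_{R\to\infty}\frac{|\{p\in P_n(R): p \text{ is reducible over }\mathbb{Z}\}|}{|P_n(R)|}=0.$$
   Context: $|A|$ denotes the cardinality of a finite set $A$. *)

From HB Require Import structures.
From mathcomp Require Import all_boot all_order all_algebra.
From mathcomp Require Import all_classical all_reals all_analysis.
From mathcomp Require Import complex.
Set Implicit Arguments. Unset Strict Implicit. Unset Printing Implicit Defensive.
Import Order.TTheory GRing.Theory Num.Theory.
Import numFieldNormedType.Exports.
Local Open Scope classical_set_scope.
Local Open Scope complex_scope.
Local Open Scope ring_scope.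

Definition polyC_of (R : realType) (p : {poly int}) : {poly R[i]} :=
  map_poly (fun z : int => z%:~R) p.

(* p has a real root lam > 1 such that all the other roots (i.e. the roots
   of p / (X - lam), counted with multiplicity) are strictly smaller than
   lam in absolute value. *)
Definition dominant_real_root (R : realType) (p : {poly int}) : Prop :=
  exists lam : R, 1 < lam /\ root (polyC_of R p) lam%:C /\
    forall z : R[i], root (polyC_of R p %/ ('X - (lam%:C)%:P)) z ->
      `|z| < lam%:C.

Definition roots_bounded (R : realType) (r : R) (p : {poly int}) : Prop :=
  forall z : R[i], root (polyC_of R p) z -> `|z| <= r%:C.

Definition Pn (R : realType) (n : nat) (r : R) : set {poly int} :=
  [set p | p \is monic /\ size p = n.+1 /\ dominant_real_root R p
           /\ roots_bounded r p].

Definition reducible_Z (p : {poly int}) : Prop :=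
  exists g h : {poly int}, p = g * h /\
    ~~ (g \is a GRing.unit) /\ ~~ (h \is a GRing.unit).

(* A monic integer polynomial of degree d whose roots lie in the disc of radius
   r has coefficients |a_j| <= 2^d r^(d-j), so there are O(r^C(d+1,2)) of
   them.  A reducible p in P_n(r) splits into monic factors of degrees k and
   n - k with the same root bound, hence there are
   O(r^(C(k+1,2) + C(n-k+1,2))) = O(r^(C(n+1,2) - 1)) of them.  Conversely,
   for m ~ r/4 and a constant K depending only on n, every monic p with
   -a_(n-1) = A in (m, 2m] and |a_j| K <= m^(n-j) for j < n - 1 lies in P_n(r):
   the intermediate value theorem gives a root l in [A/2, 2A], and comparing
   coefficients in p = q (X - l) shows that q has coefficients so small that
   its roots have modulus < m/2 <= l.  There are at least
   m^C(n+1,2) / K^(n-1) such p, so the ratio is O(1/r). *)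

From HB Require Import structures.
From mathcomp Require Import all_boot all_order all_algebra.
From mathcomp Require Import all_classical all_reals all_analysis.
From mathcomp Require Import complex finmap ring lra zify.
Set Implicit Arguments. Unset Strict Implicit. Unset Printing Implicit Defensive.
Import Order.TTheory GRing.Theory Num.Theory.
Import numFieldNormedType.Exports.
Local Open Scope classical_set_scope.
Local Open Scope complex_scope.
Local Open Scope ring_scope.

Lemma norm_coef_prod_XsubC_le (C : numDomainType) (zs : seq C) (r : C) j :
  0 <= r -> (forall z, z \in zs -> `|z| <= r) -> (j <= size zs)%N ->
  `|(\prod_(z <- zs) ('X - z%:P))`_j| <= 2 ^+ size zs * r ^+ (size zs - j).
Proof.
move=> r0 zs_le_r j_le; set k := size zs; set d := (k - j)%N.
rewrite coef_prod_XsubC // normrM normrX normrN1 expr1n mul1r.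
apply: le_trans (ler_norm_sum _ _ _) _.
have term_le (I : {set 'I_k}) : #|I| == d -> `|\prod_(i in I) zs`_i| <= r ^+ d.
  move=> /eqP <-; rewrite normr_prod -prodr_const.
  by apply: ler_prod => i _; rewrite normr_ge0 zs_le_r // mem_nth.
apply: le_trans (ler_sum _ term_le) _.
rewrite sumr_const -[leLHS]mulr_natr [leRHS]mulrC.
apply: ler_wpM2l; first exact: exprn_ge0.
rewrite -natrX ler_nat -[k in (2 ^ k)%N]card_ord -cardsT -card_powerset.
by rewrite powersetT cardsT max_card.
Qed.

Lemma norm_coef_monic_le (C : numClosedFieldType) (P : {poly C}) (r : C) j :
  P \is monic -> 0 <= r -> (forall z, root P z -> `|z| <= r) -> (j < size P)%N ->
  `|P`_j| <= 2 ^+ (size P).-1 * r ^+ ((size P).-1 - j).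
Proof.
move=> P_monic r0 roots_le j_lt.
have [zs P_eq] := closed_field_poly_normal P.
rewrite (monicP P_monic) scale1r in P_eq.
rewrite P_eq size_prod_XsubC /=; apply: norm_coef_prod_XsubC_le => //.
  by move=> z z_in; apply: roots_le; rewrite P_eq root_prod_XsubC.
by move: j_lt; rewrite P_eq size_prod_XsubC.
Qed.

Lemma horner_monic (R : comNzRingType) (P : {poly R}) k x :
  size P = k.+1 -> P \is monic -> P.[x] = \sum_(j < k) P`_j * x ^+ j + x ^+ k.
Proof.
move=> sizeP /monicP lcP; rewrite horner_coef sizeP big_ord_recr /=.
by move: lcP; rewrite /lead_coef sizeP => ->; rewrite mul1r.
Qed.

Definition tail_weight (k : nat) : nat := k.+1 * 8 ^ k.+1.

Lemma tail_weight_gt0 k : (0 < tail_weight k)%N.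
Proof. by rewrite muln_gt0 expn_gt0. Qed.

Lemma tail_weight_ge_tail k : (2 * (k * 2 ^ k.+1) <= tail_weight k)%N.
Proof.
have : (4 ^ 1 <= 4 ^ k.+1)%N by rewrite leq_exp2l.
rewrite /tail_weight -[8%N]/(2 * 4)%N expnMn; nia.
Qed.

Lemma tail_weight_gt_roots k : (k * 8 ^ k < tail_weight k)%N.
Proof. by rewrite /tail_weight ltn_mul // ltn_exp2l. Qed.

Section DominantFactor.
Variable R : rcfType.

Lemma norm_real_complex (x : R) : `|x%:C| = `|x|%:C.
Proof. by rewrite normc_def /= expr0n addr0 sqrtr_sqr. Qed.

Lemma weighted_sum_le (c : nat -> R) (k e : nat) (m y K B : R) :
  0 <= m <= 2 * y -> 0 <= B -> (k <= e)%N ->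
  (forall j, (j < k)%N -> `|c j| * K <= B * m ^+ (e - j)) ->
  (\sum_(j < k) `|c j| * y ^+ j) * K <= k%:R * (B * (2 * y) ^+ e).
Proof.
move=> /andP[m0 m_le] B0 k_le c_le; have y0 : 0 <= y by lra.
rewrite mulr_suml mulr_natl -[X in _ *+ X]card_ord -sumr_const.
apply: ler_sum => j _; have j_le : (j <= e)%N by rewrite ltnW ?(leq_trans _ k_le).
rewrite mulrAC; apply: le_trans (ler_wpM2r (exprn_ge0 _ y0) (c_le j (ltn_ord j))) _.
rewrite -(subnK j_le) exprD -mulrA addnK; apply: ler_wpM2l => //.
apply: ler_pM; rewrite ?exprn_ge0 //; apply: lerXn2r; rewrite ?nnegrE; lra.
Qed.

Variables (P : {poly R}) (k : nat) (m A : R).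
Hypotheses (sizeP : size P = k.+2) (P_monic : P \is monic) (coefPk : P`_k = - A).
Hypotheses (m_gt0 : 0 < m) (m_le_A : m <= A).
Hypothesis tail_le :
  forall j, (j < k)%N -> `|P`_j| * (tail_weight k)%:R <= m ^+ (k.+1 - j).

Let K : R := (tail_weight k)%:R.

Let K_gt0 : 0 < K. Proof. by rewrite ltr0n tail_weight_gt0. Qed.

Lemma tail_small (y : R) : m <= 2 * y ->
  `|\sum_(j < k) P`_j * y ^+ j| <= y ^+ k.+1 / 2.
Proof.
(* [lra] and [nra] ignore section hypotheses, hence local copies such as [m0]. *)
move=> m_le; have m0 := m_gt0; have y0 : 0 <= y by lra.
have m_in : 0 <= m <= 2 * y by apply/andP; split; lra.
have coef_le j : (j < k)%N -> `|P`_j| * K <= 1 * m ^+ (k.+1 - j).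
  by rewrite mul1r; exact: tail_le.
have := weighted_sum_le m_in ler01 (leqnSn k) coef_le.
rewrite mul1r exprMn mulrA => sum_le.
have K_ge : 2 * (k%:R * 2 ^+ k.+1) <= K.
  by rewrite /K -natrX -!natrM ler_nat tail_weight_ge_tail.
apply: le_trans (ler_norm_sum _ _ _) _.
under eq_bigr => j _ do rewrite normrM normrX (ger0_norm y0).
have : 0 <= \sum_(j < k) `|P`_j| * y ^+ j.
  by apply: sumr_ge0 => j _; rewrite mulr_ge0 ?exprn_ge0.
have : 0 <= y ^+ k.+1 by rewrite exprn_ge0.
have := K_gt0; nra.
Qed.

Lemma horner_dominant (y : R) :
  P.[y] = \sum_(j < k) P`_j * y ^+ j + y ^+ k * (y - A).
Proof.
by rewrite (horner_monic _ sizeP P_monic) big_ord_recr /= coefPk exprS; ring.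
Qed.

Lemma dominant_root_exists : exists2 l, A / 2 <= l <= 2 * A & root P l.
Proof.
have m0 := m_gt0; have mA := m_le_A.
apply: poly_ivt; first lra.
rewrite !horner_dominant; apply/andP; split.
- have := tail_small (y := A / 2) ltac:(lra); rewrite exprS.
  set T := \sum_(j < k) _; have := ler_norm T.
  have : 0 <= (A / 2) ^+ k by rewrite exprn_ge0 //; lra.
  nra.
- have := tail_small (y := 2 * A) ltac:(lra); rewrite exprS.
  set T := \sum_(j < k) _; have := ler_norm (- T); rewrite normrN.
  have : 0 <= (2 * A) ^+ k by rewrite exprn_ge0 //; lra.
  nra.
Qed.

Variables (l : R) (q : {poly R}).
Hypotheses (l_ge : m / 2 <= l) (P_eq : P = q * ('X - l%:P)).

Lemma size_factor : size q = k.+1.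
Proof.
have /negPf P_neq0 := monic_neq0 P_monic.
have q_neq0 : q != 0 by apply: contraFneq P_neq0 => q0; rewrite P_eq q0 mul0r.
by apply: succn_inj; rewrite -sizeP P_eq size_Mmonic ?monicXsubC ?size_XsubC ?addn2.
Qed.

Lemma factor_monic : q \is monic.
Proof. by rewrite monicE -(lead_coef_Mmonic q (monicXsubC l)) -P_eq; exact: P_monic. Qed.

(* Comparing coefficients in P = q (X - l) gives l q_i = q_(i-1) - P_i. *)
Lemma factor_coef_le j :
  (j < k)%N -> `|q`_j| * K <= 4 ^+ j.+1 * m ^+ (k - j).
Proof.
have m0 := m_gt0; have l_gt0 : 0 < l by have := l_ge; lra.
suff shifted_le i : (i <= k)%N -> `|(q * 'X)`_i| * K <= 4 ^+ i * m ^+ (k.+1 - i).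
  by move=> j_lt; have := shifted_le j.+1 j_lt; rewrite coefMX /= subSS.
elim: i => [|i IHi] i_le.
  by rewrite coefMX /= normr0 mul0r mulr_ge0 ?exprn_ge0 ?ltW.
have a_le := IHi (ltnW i_le); have Pi_le : `|P`_i| * K <= _ := tail_le i_le.
rewrite coefMX /= subSS; rewrite (subSn (ltnW i_le)) exprS in a_le Pi_le.
have Pi_eq : P`_i = (q * 'X)`_i - q`_i * l by rewrite P_eq mulrBr coefB coefMC.
rewrite Pi_eq in Pi_le.
move: a_le Pi_le; set a := (q * 'X)`_i; set b := q`_i; set M := m ^+ (k - i) => a_le Pi_le.
have M0 : 0 <= M by rewrite exprn_ge0 ?ltW.
have lb_le : l * (`|b| * K) <= m * ((4 ^+ i + 1) * M).
  have -> : l * (`|b| * K) = `|a - (a - b * l)| * K.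
    by rewrite opprB addrC subrK normrM (gtr0_norm l_gt0) mulrCA mulrA.
  apply: le_trans (ler_wpM2r (ltW K_gt0) (ler_normB _ _)) _.
  rewrite mulrDl; nra.
have b_le : `|b| * K <= 2 * ((4 ^+ i + 1) * M).
  rewrite -(ler_pM2l l_gt0) [leRHS]mulrA; apply: le_trans lb_le _.
  apply: ler_wpM2r; first by rewrite mulr_ge0 // addr_ge0 ?exprn_ge0.
  by have := l_ge; lra.
have : 1 <= 4 ^+ i :> R by rewrite exprn_ege1 // ler1n.
rewrite exprS; nra.
Qed.

(* A root of modulus t >= m/2 would give t^k <= sum_j |q_j| t^j < t^k. *)
Lemma factor_roots_lt (z : R[i]) :
  root (map_poly (real_complex R) q) z -> `|z| < (m / 2)%:C.
Proof.
have m0 := m_gt0; move=> /rootP root_z.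
have /complex_realP [t norm_z] := normr_real z.
have t0 : 0 <= t by rewrite -ler0c -norm_z.
rewrite norm_z ltcR ltNge; apply/negP => t_ge.
have Q_monic : map_poly (real_complex R) q \is monic by rewrite map_monic factor_monic.
have sizeQ : size (map_poly (real_complex R) q) = k.+1.
  by rewrite size_map_poly size_factor.
rewrite (horner_monic _ sizeQ Q_monic) in root_z.
have pow_le : t ^+ k <= \sum_(j < k) `|q`_j| * t ^+ j.
  rewrite -lecR rmorphXn rmorph_sum /= -norm_z -normrX.
  move/eqP: root_z; rewrite addrC addr_eq0 => /eqP ->; rewrite normrN.
  apply: le_trans (ler_norm_sum _ _ _) _; apply: ler_sum => j _.
  by rewrite normrM normrX coef_map /= norm_real_complex norm_z rmorphM rmorphXn.
have coef_le j : (j < k)%N -> `|q`_j| * K <= 4 ^+ k * m ^+ (k - j).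
  move=> j_lt; apply: le_trans (factor_coef_le j_lt) _.
  by rewrite ler_wpM2r ?exprn_ge0 ?ler_eXn2l ?(ltW m0) // ltr1n.
have m_le : 0 <= m <= 2 * t by apply/andP; split; lra.
have := weighted_sum_le m_le (exprn_ge0 k (ler0n R 4)) (leqnn k) coef_le.
have K_gt : k%:R * (4 ^+ k * 2 ^+ k) < K.
  by rewrite /K -!natrX -!natrM ltr_nat -expnMn tail_weight_gt_roots.
have : 0 < t ^+ k by rewrite exprn_gt0 //; lra.
rewrite exprMn; have := K_gt0; nra.
Qed.

End DominantFactor.

Lemma dominant_factor (R : rcfType) (P : {poly R}) k (m A : R) :
  size P = k.+2 -> P \is monic -> P`_k = - A -> 0 < m -> m <= A ->
  (forall j, (j < k)%N -> `|P`_j| * (tail_weight k)%:R <= m ^+ (k.+1 - j)) ->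
  exists l q, [/\ A / 2 <= l <= 2 * A, P = q * ('X - l%:P) &
    forall z : R[i], root (map_poly (real_complex R) q) z -> `|z| < (m / 2)%:C].
Proof.
move=> sizeP P_monic coefPk m_gt0 m_le_A tail_le.
have [l l_in /factor_theorem[q P_eq]] :=
  dominant_root_exists sizeP P_monic coefPk m_gt0 m_le_A tail_le.
have l_ge : m / 2 <= l by case/andP: l_in => ? _; lra.
exists l, q; split=> // z.
exact (@factor_roots_lt _ _ _ _ sizeP P_monic m_gt0 tail_le _ _ l_ge P_eq z).
Qed.

Fixpoint choices (T : Type) (ss : seq (seq T)) : seq (seq T) :=
  if ss is s :: ss' then [seq x :: t | x <- s, t <- choices ss'] else [:: [::]].

Lemma size_choices (T : Type) (ss : seq (seq T)) :
  size (choices ss) = (\prod_(s <- ss) size s)%N.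
Proof. by elim: ss => [|s ss IHss]; rewrite ?big_nil ?big_cons //= size_allpairs IHss. Qed.

Lemma choices_uniq (T : eqType) (ss : seq (seq T)) :
  all uniq ss -> uniq (choices ss).
Proof.
elim: ss => [|s ss IHss] //= /andP[s_uniq /IHss ss_uniq].
by apply: allpairs_uniq => // -[x t] [y u] _ _ [-> ->].
Qed.

Lemma mem_choices (T : eqType) (x0 : T) (ss : seq (seq T)) (t : seq T) :
  t \in choices ss <->
  size t = size ss /\ forall j, (j < size ss)%N -> nth x0 t j \in nth [::] ss j.
Proof.
elim: ss t => [|s ss IHss] [|x t] /=; try by rewrite inE; split=> // -[].
  by split=> [/allpairsP[[y u] [_ _]] | []].
split=> [/allpairsP[[y u] /= [y_in /IHss[size_u u_in] [-> ->]]] | [[size_t] t_in]].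
  by split=> [|[|j] //=]; [rewrite size_u | exact: u_in].
apply: (allpairs_f (fun y u => y :: u)); first exact: (t_in 0%N).
by apply/IHss; split=> // j; apply: (t_in j.+1).
Qed.

Section MonicBox.
Variable R : nzRingType.

Definition monic_box (ss : seq (seq R)) : seq {poly R} :=
  [seq Poly (rcons t 1) | t <- choices ss].

Lemma polyseq_rcons1 (t : seq R) : Poly (rcons t 1) = rcons t 1 :> seq R.
Proof. by apply: (@PolyK _ 0); rewrite last_rcons oner_eq0. Qed.

Lemma size_monic_box ss : size (monic_box ss) = (\prod_(s <- ss) size s)%N.
Proof. by rewrite size_map size_choices. Qed.

Lemma monic_box_uniq ss : all uniq ss -> uniq (monic_box ss).
Proof.
move=> /choices_uniq ss_uniq; rewrite map_inj_in_uniq // => t u _ _ /(congr1 polyseq).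
by rewrite !polyseq_rcons1 => /rcons_inj[].
Qed.

Lemma mem_monic_box ss (p : {poly R}) :
  p \in monic_box ss <-> [/\ p \is monic, size p = (size ss).+1 &
                          forall j, (j < size ss)%N -> p`_j \in nth [::] ss j].
Proof.
split=> [/mapP[t /(mem_choices 0)[size_t t_in] ->] | [p_monic size_p p_in]].
  rewrite monicE /lead_coef !polyseq_rcons1 size_rcons nth_rcons ltnn eqxx size_t.
  by split=> // j j_lt; rewrite nth_rcons size_t j_lt t_in.
have p_eq : polyseq p = rcons (take (size ss) p) 1.
  move/monicP: p_monic; rewrite /lead_coef size_p /= => lc_p.
  by rewrite -lc_p -take_nth ?size_p // take_oversize ?size_p.
apply/mapP; exists (take (size ss) p); last by rewrite -p_eq polyseqK.
apply/(mem_choices 0); rewrite size_takel ?size_p //; split=> // j j_lt.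
by rewrite nth_take // p_in.
Qed.

End MonicBox.

Definition zrange (a : int) (l : nat) : seq int := [seq a + n%:Z | n <- iota 0 l].

Lemma size_zrange a l : size (zrange a l) = l.
Proof. by rewrite size_map size_iota. Qed.

Lemma zrange_uniq a l : uniq (zrange a l).
Proof. by rewrite map_inj_uniq ?iota_uniq // => n n' /addrI []. Qed.

Lemma mem_zrange a l x : (x \in zrange a l) = (a <= x < a + l%:Z).
Proof.
apply/mapP/idP=> [[n] | /andP[a_le x_lt]].
  by rewrite mem_iota add0n => n_lt ->; rewrite lerDl ltrD2l ltz_nat.
exists (absz (x - a)); last by rewrite gez0_abs ?subr_ge0 // addrCA subrr addr0.
by rewrite mem_iota add0n -ltz_nat gez0_abs ?subr_ge0 // ltrBlDl.
Qed.

Definition zball (b : nat) : seq int := zrange (- b%:Z) (2 * b).+1.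

Lemma size_zball b : size (zball b) = (2 * b).+1.
Proof. exact: size_zrange. Qed.

Lemma mem_zball b x : (x \in zball b) = (`|x| <= b%:Z).
Proof. by rewrite mem_zrange; apply/idP/idP; lia. Qed.

Lemma big_iota0 (T : Type) (idx : T) (op : T -> T -> T) (F : nat -> T) k :
  \big[op/idx]_(j <- iota 0 k) F j = \big[op/idx]_(j < k) F j.
Proof. by rewrite -(big_mkord xpredT) /index_iota subn0. Qed.

Lemma sum_sub_bin2 k : (\sum_(j < k) (k - j))%N = 'C(k.+1, 2).
Proof.
elim: k => [|k IHk]; first by rewrite big_ord0.
rewrite big_ord_recl subn0; under eq_bigr => j _ do rewrite subSS.
by rewrite IHk [RHS]binS bin1 addnC.
Qed.

Lemma bin2D a b : 'C(a + b, 2) = ('C(a, 2) + 'C(b, 2) + a * b)%N.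
Proof.
elim: b => [|b IHb]; first by rewrite addn0 bin0n muln0 !addn0.
by rewrite addnS !binS !bin1 IHb mulnS; lia.
Qed.

Lemma bin2_split n k : (0 < k < n)%N ->
  ('C(k.+1, 2) + 'C((n - k).+1, 2) < 'C(n.+1, 2))%N.
Proof.
move=> /andP[k_gt0 k_lt]; have -> : n.+1 = (k.+1 + (n - k))%N by lia.
rewrite bin2D [X in (_ + X < _)%N]binS bin1 mulSn.
have : (0 < k * (n - k))%N by rewrite muln_gt0 k_gt0 subn_gt0.
lia.
Qed.

Definition coef_box (k N : nat) : seq {poly int} :=
  monic_box [seq zball (2 ^ k * N ^ (k - j)) | j <- iota 0 k].

Lemma mem_coef_box k N (p : {poly int}) :
  p \is monic -> size p = k.+1 ->
  (forall j, (j < k)%N -> `|p`_j| <= (2 ^ k * N ^ (k - j))%:Z) ->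
  p \in coef_box k N.
Proof.
move=> p_monic size_p coef_le; apply/mem_monic_box; rewrite size_map size_iota.
split=> // j j_lt; rewrite (nth_map 0%N) ?size_iota // nth_iota // mem_zball.
exact: coef_le.
Qed.

Lemma size_coef_box k N : (0 < N)%N ->
  (size (coef_box k N) <= (3 * 2 ^ k) ^ k * N ^ 'C(k.+1, 2))%N.
Proof.
move=> N_gt0; rewrite size_monic_box big_map big_iota0.
under eq_bigr => j _ do rewrite size_zball.
have -> : ((3 * 2 ^ k) ^ k = \prod_(j < k) (3 * 2 ^ k))%N.
  by rewrite prod_nat_const card_ord.
rewrite -sum_sub_bin2 expn_sum -big_split /=.
apply: leq_prod => j _.
have : (0 < 2 ^ k * N ^ (k - j))%N by rewrite muln_gt0 !expn_gt0 N_gt0.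
by rewrite -mulnA; move: (2 ^ k * _)%N => b; lia.
Qed.

Definition dominant_box (k m : nat) : seq {poly int} :=
  monic_box (rcons [seq zball (m ^ (k.+1 - j) %/ tail_weight k) | j <- iota 0 k]
                   (zrange (- (2 * m)%:Z) m)).

Lemma dominant_box_uniq k m : uniq (dominant_box k m).
Proof.
apply: monic_box_uniq; rewrite all_rcons zrange_uniq /=.
by apply/allP => _ /mapP[j _ ->]; exact: zrange_uniq.
Qed.

Lemma size_dominant_box k m :
  (m ^ 'C(k.+2, 2) <= tail_weight k ^ k * size (dominant_box k m))%N.
Proof.
rewrite size_monic_box big_rcons /= size_zrange big_map big_iota0.
under eq_bigr => j _ do rewrite size_zball.
rewrite -sum_sub_bin2 big_ord_recr /= subSnn expnD expn1 mulnA leq_mul2r; apply/orP; right.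
have -> : (tail_weight k ^ k = \prod_(j < k) tail_weight k)%N.
  by rewrite prod_nat_const card_ord.
rewrite expn_sum -big_split; apply: leq_prod => j _ /=.
apply: leq_trans (ltnW (ltn_ceil _ (tail_weight_gt0 k))) _.
by rewrite mulnC leq_mul2l ltnS mul2n -addnn leq_addr orbT.
Qed.

Lemma mem_dominant_box k m (p : {poly int}) : p \in dominant_box k m ->
  [/\ p \is monic, size p = k.+2, m%:Z < - p`_k <= (2 * m)%:Z &
      forall j, (j < k)%N -> `|p`_j| * (tail_weight k)%:Z <= (m ^ (k.+1 - j))%:Z].
Proof.
move=> /mem_monic_box[p_monic]; rewrite size_rcons size_map size_iota => size_p coef_in.
split=> //.
  have := coef_in k (ltnSn k).
  rewrite nth_rcons size_map size_iota ltnn eqxx mem_zrange => /andP[lo hi].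
  (* [set] identifies the two elaborations of [p`_k] for [lia]. *)
  by move: lo hi; set x := p`_k => lo hi; apply/andP; split; lia.
move=> j j_lt; have := coef_in j (ltnW j_lt).
rewrite nth_rcons size_map size_iota j_lt (nth_map 0%N) ?size_iota // nth_iota //.
rewrite mem_zball => coef_le; apply: le_trans (ler_wpM2r _ coef_le) _ => //.
by rewrite -PoszM lez_nat leq_trunc_div.
Qed.

Lemma monic_nonunit_size (R : idomainType) (g : {poly R}) :
  g \is monic -> g \isn't a GRing.unit -> (1 < size g)%N.
Proof.
move=> g_monic; apply: contraR; rewrite -leqNgt => size_le1.
have size_g : size g = 1%N.
  by have := monic_neq0 g_monic; rewrite -size_poly_gt0; lia.
move/monicP: g_monic; rewrite poly_unitE /lead_coef size_g /= => ->.
exact: unitr1.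
Qed.

Lemma reducible_monic_factors (p : {poly int}) : p \is monic -> reducible_Z p ->
  exists g h, [/\ p = g * h, g \is monic, h \is monic, (1 < size g)%N & (1 < size h)%N].
Proof.
move=> p_monic [g [h [p_eq [g_nunit h_nunit]]]].
have lc_eq : lead_coef g * lead_coef h = 1 by rewrite -lead_coefM -p_eq; exact/monicP.
wlog g_monic : g h p_eq g_nunit h_nunit lc_eq / g \is monic.
  move=> monic_case.
  have lc_unit : lead_coef g \is a GRing.unit by apply/unitrPr; exists (lead_coef h).
  have /orP[/eqP lc_g | /eqP lc_g] : (lead_coef g == 1) || (lead_coef g == -1) := lc_unit.
    by apply: (monic_case g h) => //; exact/monicP.
  apply: (monic_case (- g) (- h)); rewrite ?mulrNN ?unitrN ?lead_coefN ?mulrNN //.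
  by rewrite monicE lead_coefN lc_g opprK.
have h_monic : h \is monic.
  by rewrite monicE -(lead_coef_monicM h g_monic) -p_eq; exact: p_monic.
by exists g, h; split; rewrite // monic_nonunit_size.
Qed.

Definition reducible_box (n N : nat) : seq {poly int} :=
  flatten [seq [seq g * h | g <- coef_box k N, h <- coef_box (n - k) N] | k <- iota 1 n.-1].

Definition reducible_const (n : nat) : nat :=
  \sum_(k <- iota 1 n.-1) (3 * 2 ^ k) ^ k * (3 * 2 ^ (n - k)) ^ (n - k).

Lemma size_reducible_box n N : (0 < N)%N ->
  (size (reducible_box n N) <= reducible_const n * N ^ ('C(n.+1, 2)).-1)%N.
Proof.
move=> N_gt0; rewrite size_flatten /shape -map_comp sumnE big_map big_distrl /=.
rewrite !big_seq; apply: leq_sum => k; rewrite mem_iota size_allpairs => k_in.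
apply: leq_trans (leq_mul (size_coef_box k N_gt0) (size_coef_box (n - k) N_gt0)) _.
rewrite mulnACA leq_mul2l -expnD leq_pexp2l ?orbT //.
have : (0 < k < n)%N by lia.
by move/bin2_split; lia.
Qed.

Lemma card_fset_set_le_size (T : choiceType) (A : set T) (s : seq T) :
  (forall x, A x -> x \in s) -> (#|` fset_set A| <= size s)%N.
Proof.
move=> A_sub; have A_fin : finite_set A.
  by apply: (sub_finite_set _ (finite_seq s)) => x /A_sub.
apply: uniq_leq_size; first exact: fset_uniq.
by move=> x; rewrite in_fset_set // in_setE => /A_sub.
Qed.

Lemma size_le_card_fset_set (T : choiceType) (A : set T) (s : seq T) :
  finite_set A -> uniq s -> (forall x, x \in s -> A x) -> (size s <= #|` fset_set A|)%N.
Proof.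
move=> A_fin s_uniq s_sub; apply: uniq_leq_size => // x /s_sub Ax.
by rewrite in_fset_set // in_setE.
Qed.

Section IntegerPolynomials.
Variable R : realType.

Lemma polyC_ofE (p : {poly int}) :
  polyC_of R p = map_poly (real_complex R) (map_poly intr p).
Proof.
by rewrite /polyC_of -map_poly_comp; apply: eq_map_poly => z /=; rewrite rmorph_int.
Qed.

Lemma polyC_of_monic (p : {poly int}) : p \is monic -> polyC_of R p \is monic.
Proof. exact: monic_map. Qed.

Lemma size_polyC_of (p : {poly int}) : size (polyC_of R p) = size p.
Proof. by rewrite polyC_ofE !size_map_inj_poly //; [exact: intr_inj|exact: complexI]. Qed.

Lemma roots_bounded_factor (r : R) (g h : {poly int}) :
  roots_bounded r (g * h) -> roots_bounded r g.
Proof. by move=> gh_roots z g_z; apply: gh_roots; rewrite /polyC_of rmorphM rootM g_z. Qed.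

Lemma roots_bounded_coef_le (p : {poly int}) (r : R) j :
  p \is monic -> 0 <= r -> roots_bounded r p -> (j < size p)%N ->
  `|p`_j|%:~R <= 2 ^+ (size p).-1 * r ^+ ((size p).-1 - j) :> R.
Proof.
move=> p_monic r0 p_roots j_lt.
have := @norm_coef_monic_le _ (polyC_of R p) r%:C j (polyC_of_monic p_monic).
rewrite ler0c size_polyC_of coef_map /= -intr_norm => /(_ r0 p_roots j_lt).
by rewrite -(rmorph_int (real_complex R)) -[2 in leRHS](rmorph_nat (real_complex R)) -!rmorphXn -rmorphM lecR.
Qed.

Lemma roots_bounded_in_coef_box k N (r : R) (p : {poly int}) :
  0 <= r <= N%:R -> p \is monic -> size p = k.+1 -> roots_bounded r p ->
  p \in coef_box k N.
Proof.
move=> /andP[r0 r_le] p_monic size_p p_roots; apply: mem_coef_box => // j j_lt.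
rewrite -(ler_int R) -pmulrn natrM !natrX.
have := roots_bounded_coef_le p_monic r0 p_roots; rewrite size_p /= => /(_ j (ltnW j_lt)).
move/le_trans; apply; apply: ler_wpM2l; first exact: exprn_ge0.
by apply: lerXn2r; rewrite ?nnegrE ?ler0n.
Qed.

Lemma Pn_finite n (r : R) : 0 <= r -> finite_set (Pn n r).
Proof.
move=> r0; apply: (sub_finite_set _ (finite_seq (coef_box n (Num.truncn r).+1))).
move=> p [p_monic [size_p [_ p_roots]]]; apply: roots_bounded_in_coef_box p_roots => //.
by rewrite r0 ltW ?truncnS_gt.
Qed.

Lemma reducible_in_box n N (r : R) (p : {poly int}) :
  0 <= r <= N%:R -> Pn n r p -> reducible_Z p -> p \in reducible_box n N.
Proof.
move=> r_in [p_monic [size_p [_ p_roots]]] /(reducible_monic_factors p_monic).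
case=> g [h [p_eq g_monic h_monic size_g size_h]].
have size_gh : (size g + size h = n.+2)%N.
  by rewrite -size_p p_eq size_mul ?monic_neq0 // prednK // addn_gt0 ltnW.
apply/flatten_mapP; exists (size g).-1; first by rewrite mem_iota; lia.
rewrite p_eq; apply: allpairs_f; apply: roots_bounded_in_coef_box r_in _ _ _ => //.
- by rewrite prednK // ltnW.
- by apply: (roots_bounded_factor (h := h)); rewrite -p_eq.
- by lia.
- by apply: (roots_bounded_factor (h := g)); rewrite mulrC -p_eq.
Qed.

Lemma dominant_box_sub_Pn k m (r : R) (p : {poly int}) :
  (3 <= m)%N -> 4 * m%:R <= r -> p \in dominant_box k m -> Pn k.+1 r p.
Proof.
move=> m_ge r_ge /mem_dominant_box[p_monic size_p /andP[A_gt A_le] coef_le].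
set P := map_poly intr p : {poly R}.
have sizeP : size P = k.+2 by rewrite size_map_inj_poly //; exact: intr_inj.
have P_monic : P \is monic by exact: monic_map.
have coefPk : P`_k = - (- p`_k)%:~R by rewrite coef_map /= rmorphN opprK.
have m_gt0 : 0 < m%:R :> R by rewrite ltr0n; lia.
have m_le_A : m%:R <= (- p`_k)%:~R :> R by rewrite pmulrn ler_int ltW.
have tail_le j : (j < k)%N -> `|P`_j| * (tail_weight k)%:R <= m%:R ^+ (k.+1 - j).
  by move=> j_lt; rewrite coef_map /= -intr_norm -natrX !pmulrn -intrM ler_int coef_le.
have [l [q [/andP[l_ge l_le] P_eq q_roots]]] :=
  dominant_factor sizeP P_monic coefPk m_gt0 m_le_A tail_le.
have m3 : 3 <= m%:R :> R by rewrite ler_nat.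
have A_le' : (- p`_k)%:~R <= 2 * m%:R :> R.
  by rewrite -natrM pmulrn ler_int.
have pC_eq : polyC_of R p = map_poly (real_complex R) q * ('X - (l%:C)%:P).
  by rewrite polyC_ofE -/P P_eq rmorphM /= map_polyXsubC.
split=> //; split=> //; split.
- exists l; split; first lra.
  split; first by rewrite pC_eq rootM root_XsubC eqxx orbT.
  move=> z; rewrite pC_eq mulpK ?polyXsubC_eq0 // => /q_roots /lt_le_trans; apply.
  by rewrite lecR; lra.
- move=> z; rewrite pC_eq rootM root_XsubC => /orP[/q_roots z_lt | /eqP ->].
    by apply: ltW (lt_le_trans z_lt _); rewrite lecR; lra.
  by rewrite norm_real_complex lecR ger0_norm; lra.
Qed.

Lemma card_reducible_le n N (r : R) : (0 < N)%N -> 0 <= r <= N%:R ->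
  (#|` fset_set (Pn n r `&` reducible_Z)| <=
     reducible_const n * N ^ ('C(n.+1, 2)).-1)%N.
Proof.
move=> N_gt0 r_in; apply: leq_trans (size_reducible_box n N_gt0).
by apply: card_fset_set_le_size => p [Pn_p red_p]; exact: reducible_in_box r_in Pn_p red_p.
Qed.

Lemma card_Pn_ge k m (r : R) : (3 <= m)%N -> 4 * m%:R <= r ->
  (m ^ 'C(k.+2, 2) <= tail_weight k ^ k * #|` fset_set (Pn k.+1 r)|)%N.
Proof.
move=> m_ge r_ge; apply: leq_trans (size_dominant_box k m) _.
rewrite leq_mul2l; apply/orP; right; apply: size_le_card_fset_set.
- by apply: Pn_finite; apply: le_trans r_ge; rewrite mulr_ge0.
- exact: dominant_box_uniq.
- by move=> p; exact: dominant_box_sub_Pn.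
Qed.

Lemma card_reducible_growth n (r : R) : (0 < n)%N -> 1 <= r ->
  #|` fset_set (Pn n r `&` reducible_Z)|%:R * r <=
    (reducible_const n * 2 ^ 'C(n.+1, 2))%:R * r ^+ 'C(n.+1, 2).
Proof.
move=> n_gt0 r_ge1; set T := 'C(n.+1, 2); set N := (Num.truncn r).+1.
have r_ge0 : 0 <= r by lra.
have T_gt0 : (0 < T)%N by rewrite bin_gt0.
have r_lt : r < N%:R by exact: truncnS_gt.
have N_le : N%:R <= 2 * r.
  by have /andP[trunc_le _] := truncn_itv r_ge0; rewrite /N -[_.+1]addn1 natrD; lra.
have r_in : 0 <= r <= N%:R by rewrite r_ge0 ltW.
have := card_reducible_le n (ltn0Sn _) r_in.
rewrite -(ler_nat R) natrM natrX => card_le.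
apply: le_trans (ler_pM (ler0n _ _) r_ge0 card_le (ltW r_lt)) _.
rewrite -mulrA -exprSr prednK // natrM natrX -mulrA ler_wpM2l ?ler0n // -exprMn.
by apply: lerXn2r; rewrite ?nnegrE ?ler0n //; lra.
Qed.

Lemma card_Pn_growth k (r : R) : 16 <= r ->
  r ^+ 'C(k.+2, 2) <=
    (8 ^ 'C(k.+2, 2) * tail_weight k ^ k)%:R * #|` fset_set (Pn k.+1 r)|%:R.
Proof.
move=> r_ge; set T := 'C(k.+2, 2); set m := Num.truncn (r / 4).
have /andP[m_le m_gt] := truncn_itv (divr_ge0 (le_trans (ler0n R 16) r_ge) (ler0n R 4)).
rewrite -/m in m_le m_gt; rewrite -[m.+1]addn1 natrD in m_gt.
have m_ge : (3 <= m)%N by rewrite -(ler_nat R); lra.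
have := card_Pn_ge k (r := r) m_ge ltac:(lra).
rewrite -(ler_nat R) !natrM !natrX => card_ge.
rewrite -mulrA; apply: le_trans (ler_wpM2l (exprn_ge0 _ (ler0n _ _)) card_ge).
rewrite -exprMn; apply: lerXn2r; rewrite ?nnegrE ?ler0n //; lra.
Qed.

End IntegerPolynomials.

Lemma ratio_cvg0 (R : realType) (a b : R -> R) (C c : R) (T : nat) :
  0 <= C -> 0 < c ->
  (\forall r \near +oo, 0 <= a r /\ a r * r <= C * r ^+ T /\ r ^+ T <= c * b r) ->
  (fun r => a r / b r) @ +oo --> 0.
Proof.
move=> C_ge0 c_gt0 bounds; apply/cvgr0Pnorm_lt => e e_gt0.
near=> r.
have [a_ge0 [ar_le rT_le]] : 0 <= a r /\ a r * r <= C * r ^+ T /\ r ^+ T <= c * b r.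
  by near: r.
have r_gt0 : 0 < r by near: r; apply: nbhs_pinfty_gt; rewrite num_real.
have r_gt : C * c / e < r by near: r; apply: nbhs_pinfty_gt; rewrite num_real.
have rT_gt0 : 0 < r ^+ T by rewrite exprn_gt0.
have b_gt0 : 0 < b r by rewrite -(pmulr_rgt0 _ c_gt0); apply: lt_le_trans rT_le.
have ratio_lt : a r / b r < e.
  rewrite ltr_pdivrMr // -(ltr_pM2r r_gt0).
  apply: le_lt_trans ar_le _; apply: le_lt_trans (ler_wpM2l C_ge0 rT_le) _.
  by rewrite ltr_pdivrMr // in r_gt; nra.
by rewrite ger0_norm ?divr_ge0 // ltW.
Unshelve. all: by end_near.
Qed.

Theorem lemma7 (R : realType) (n : nat) (hn : (1 <= n)%N) :
  (fun r : R =>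
     (#|` fset_set (Pn n r `&` reducible_Z)|%:R
      / #|` fset_set (Pn n r)|%:R) : R) @ +oo --> (0 : R).
Proof.
case: n hn => [//|k] _; set T := 'C(k.+2, 2).
apply: (@ratio_cvg0 _ _ _ (reducible_const k.+1 * 2 ^ T)%:R
                         (8 ^ T * tail_weight k ^ k)%:R T).
- exact: ler0n.
- by rewrite ltr0n muln_gt0 expn_gt0 expn_gt0 tail_weight_gt0.
near=> r; split; first exact: ler0n.
have r_ge : 16 <= r by near: r; apply: nbhs_pinfty_ge; rewrite num_real.
split; [apply: card_reducible_growth | apply: card_Pn_growth] => //; lra.
Unshelve. all: by end_near.
Qed.
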